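(* Let $r>2-\sqrt2-\ln\big(2\sqrt2-2\big)$ be fixed and consider the one-parameter family of maps $f(x,k)=x^2\exp(r-x)+k$ with bifurcation parameter $k$. Then there is a unique point $x(r)\in(0,2-\sqrt2)$ and a unique parameter value $k^*$ such that $x(r)$ is a fixed point of $f(\cdot,k^* )$ in the interval $(0,2-\sqrt2)$ and the family undergoes a fold bifurcation at $x(r)$ with respect to $k$ at the bifurcation value $k=k^*$. Moreover, \[ k^*=x(r)-\frac{x(r)}{2-x(r)}. \]
   Context: For a smooth one-parameter family $x\mapsto f(x,a)$ of maps of $\mathbb{R}$ with a fixed point $x_0$ at $a=a_0$, one says that a fold (saddle-node) bifurcation occurs at $x_0$ for $a=a_0$ if $\frac{\partial f}{\partial x}(x_0,a_0)=1$ and the nondegeneracy conditions (A.1) $\frac{\partial^2 f}{\partial x^2}(x_0,a_0)\neq0$ and (A.2) $\frac{\partial f}{\partial a}(x_0,a_0)\neq 0$ hold; then smooth invertible changes of coordinates and parameter transform the system into $\eta\mapsto\beta+\eta\pm\eta^2+O(\eta^3)$. *)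

From Stdlib Require Import Reals.
From Coquelicot Require Import Coquelicot.
Open Scope R_scope.

Definition fold_bifurcation (f : R -> R -> R) (x0 a0 : R) : Prop :=
  f x0 a0 = x0 /\
  is_derive (fun x => f x a0) x0 1 /\
  (exists f2 : R, is_derive_n (fun x => f x a0) 2 x0 f2 /\ f2 <> 0) /\
  (exists fa : R, is_derive (fun a => f x0 a) a0 fa /\ fa <> 0).

Definition ricker_family (r : R) (x k : R) : R := x ^ 2 * exp (r - x) + k.

(* The x-derivative of the family is g(x) = x (2 - x) exp(r - x), independent of k,
   and g'(x) = (x^2 - 4x + 2) exp(r - x) > 0 on (0, 2 - sqrt 2), whose right end is
   the smaller root of x^2 - 4x + 2.  So g increases strictly from g(0) = 0 to
   g(2 - sqrt 2) = (2 sqrt 2 - 2) exp(r - 2 + sqrt 2), which exceeds 1 exactly under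
   the hypothesis on r; hence g = 1 at a unique point x(r) of the interval.  There
   x^2 exp(r - x) = x / (2 - x), so the fixed-point equation determines k*, while
   df/dk = 1 and g'(x(r)) > 0 are the two nondegeneracy conditions. *)

From Stdlib Require Import Reals Lra.
From Coquelicot Require Import Coquelicot.
Open Scope R_scope.

Definition ricker_dx (r x : R) : R := x * (2 - x) * exp (r - x).
Definition ricker_dxx (r x : R) : R := (x ^ 2 - 4 * x + 2) * exp (r - x).

Lemma is_derive_ricker_x (r k x : R) :
  is_derive (fun y => ricker_family r y k) x (ricker_dx r x).
Proof. unfold ricker_family, ricker_dx. auto_derive; auto. unfold Rminus; ring. Qed.

Lemma is_derive_ricker_dx (r x : R) : is_derive (ricker_dx r) x (ricker_dxx r x).
Proof. unfold ricker_dx, ricker_dxx. auto_derive; auto. unfold Rminus; ring. Qed.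

Lemma is_derive_ricker_k (r x k : R) : is_derive (fun a => ricker_family r x a) k 1.
Proof. unfold ricker_family. auto_derive; auto. Qed.

Lemma is_derive_n_ricker_xx (r k x : R) :
  is_derive_n (fun y => ricker_family r y k) 2 x (ricker_dxx r x).
Proof.
  apply (is_derive_ext (ricker_dx r)); [|apply is_derive_ricker_dx].
  intro y. symmetry. apply is_derive_unique, is_derive_ricker_x.
Qed.

Lemma sqrt2_bounds : 1 < sqrt 2 < 2.
Proof.
  pose proof (sqrt_sqrt 2 ltac:(lra)). pose proof (sqrt_pos 2).
  split; nra.
Qed.

Lemma ricker_dxx_pos (r x : R) : 0 < x < 2 - sqrt 2 -> 0 < ricker_dxx r x.
Proof.
  intros Hx. unfold ricker_dxx. apply Rmult_lt_0_compat; [|apply exp_pos].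
  pose proof (sqrt_sqrt 2 ltac:(lra)). pose proof sqrt2_bounds.
  replace (x ^ 2 - 4 * x + 2) with ((2 - sqrt 2 - x) * (2 + sqrt 2 - x)) by nra.
  apply Rmult_lt_0_compat; lra.
Qed.

Lemma ricker_dx_increasing (r x y : R) :
  0 < x -> x < y -> y < 2 - sqrt 2 -> ricker_dx r x < ricker_dx r y.
Proof.
  apply (incr_function _ (Finite 0) (Finite (2 - sqrt 2)) (ricker_dxx r));
    simpl; intros.
  - apply is_derive_ricker_dx.
  - apply ricker_dxx_pos; lra.
Qed.

Lemma ricker_dx_inj (r x y : R) :
  0 < x < 2 - sqrt 2 -> 0 < y < 2 - sqrt 2 -> ricker_dx r x = ricker_dx r y -> x = y.
Proof.
  intros Hx Hy Hxy.
  destruct (Rtotal_order x y) as [Hlt | [Heq | Hgt]]; auto.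
  - pose proof (ricker_dx_increasing r x y ltac:(lra) Hlt ltac:(lra)); lra.
  - pose proof (ricker_dx_increasing r y x ltac:(lra) Hgt ltac:(lra)); lra.
Qed.

Lemma ricker_dx_right_end_gt_1 (r : R) :
  r > 2 - sqrt 2 - ln (2 * sqrt 2 - 2) -> 1 < ricker_dx r (2 - sqrt 2).
Proof.
  intros Hr. pose proof (sqrt_sqrt 2 ltac:(lra)). pose proof sqrt2_bounds.
  assert (Hc : 0 < 2 * sqrt 2 - 2) by lra.
  unfold ricker_dx.
  replace ((2 - sqrt 2) * (2 - (2 - sqrt 2))) with (2 * sqrt 2 - 2) by nra.
  assert (Hexp : / (2 * sqrt 2 - 2) < exp (r - (2 - sqrt 2))).
  { rewrite <- (exp_ln (2 * sqrt 2 - 2)), <- exp_Ropp by exact Hc.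
    apply exp_increasing; lra. }
  apply Rmult_lt_compat_l with (r := 2 * sqrt 2 - 2) in Hexp; [|exact Hc].
  rewrite Rinv_r in Hexp; lra.
Qed.

Lemma ricker_dx_eq_1_exists (r : R) :
  r > 2 - sqrt 2 - ln (2 * sqrt 2 - 2) ->
  exists x, 0 < x < 2 - sqrt 2 /\ ricker_dx r x = 1.
Proof.
  intros Hr. pose proof sqrt2_bounds.
  pose proof (ricker_dx_right_end_gt_1 r Hr) as Hend.
  assert (H0 : ricker_dx r 0 = 0) by (unfold ricker_dx; ring).
  assert (Hcont : forall x, continuous (ricker_dx r) x).
  { intro x. apply (ex_derive_continuous (ricker_dx r)).
    eexists. apply is_derive_ricker_dx. }
  destruct (IVT_gen_consistent (ricker_dx r) 0 (2 - sqrt 2) 1 Hcont) as [x [Hx H1]].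
  { rewrite H0, Rmin_left, Rmax_right; lra. }
  rewrite Rmin_left, Rmax_right in Hx by lra.
  exists x. split; [|exact H1].
  split; apply Rnot_le_lt; intro Hle.
  - replace x with 0 in H1 by lra. lra.
  - replace x with (2 - sqrt 2) in H1 by lra. lra.
Qed.

Lemma ricker_fixed_point_iff (r x k : R) :
  x <> 2 -> ricker_dx r x = 1 ->
  (ricker_family r x k = x <-> k = x - x / (2 - x)).
Proof.
  intros Hx2 Hdx. unfold ricker_family.
  assert (Hquot : x ^ 2 * exp (r - x) = x / (2 - x)).
  { unfold ricker_dx in Hdx.
    apply Rmult_eq_reg_r with (2 - x); [|lra].
    replace (x / (2 - x) * (2 - x)) with x by (field; lra).
    transitivity (x * (x * (2 - x) * exp (r - x))); [ring|].
    rewrite Hdx; ring. }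
  rewrite Hquot. lra.
Qed.

Lemma fold_bifurcation_ricker_iff (r x k : R) :
  0 < x < 2 - sqrt 2 ->
  (fold_bifurcation (ricker_family r) x k <->
   ricker_dx r x = 1 /\ k = x - x / (2 - x)).
Proof.
  intros Hx. pose proof sqrt2_bounds.
  split.
  - intros [Hfix [Hdx _]].
    assert (Hslope : ricker_dx r x = 1).
    { rewrite <- (is_derive_unique _ _ _ (is_derive_ricker_x r k x)).
      exact (is_derive_unique _ _ _ Hdx). }
    split; [exact Hslope|].
    apply (ricker_fixed_point_iff r x k); [lra | exact Hslope | exact Hfix].
  - intros [Hslope Hk]. split; [|split; [|split]].
    + apply (ricker_fixed_point_iff r x k); [lra | exact Hslope | exact Hk].
    + rewrite <- Hslope. apply is_derive_ricker_x.
    + exists (ricker_dxx r x). split; [apply is_derive_n_ricker_xx|].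
      pose proof (ricker_dxx_pos r x Hx). lra.
    + exists 1. split; [apply is_derive_ricker_k | lra].
Qed.

Theorem theorem2p4 (r : R) :
  r > 2 - sqrt 2 - ln (2 * sqrt 2 - 2) ->
  exists xr kstar : R,
    (0 < xr < 2 - sqrt 2 /\
     fold_bifurcation (ricker_family r) xr kstar /\
     kstar = xr - xr / (2 - xr)) /\
    (forall x k : R, 0 < x < 2 - sqrt 2 ->
       fold_bifurcation (ricker_family r) x k -> x = xr /\ k = kstar).
Proof.
  intros Hr.
  destruct (ricker_dx_eq_1_exists r Hr) as [xr [Hxr Hslope]].
  exists xr, (xr - xr / (2 - xr)).
  split.
  - split; [exact Hxr|]. split; [|reflexivity].
    apply fold_bifurcation_ricker_iff; auto.
  - intros x k Hx Hfold.
    apply fold_bifurcation_ricker_iff in Hfold as [Hslope_x Hk]; [|exact Hx].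
    assert (Hxeq : x = xr) by (apply (ricker_dx_inj r); congruence).
    subst x. auto.
Qed.
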